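(* Let $\gamma>0$, $\tau>1$, $\alpha\in D_{\gamma,\tau}$, and let $p_n/q_n$ be the convergents of $\alpha$. For even $n$ put $I_n:=\left(\frac{p_n}{q_n},\frac{p_{n+2}}{q_{n+2}}\right)$. Suppose there is $N\in\mathbb{N}$ such that for every even $n>N$, $$\frac{p_n}{q_n}+\frac{\gamma}{q_n^{\tau+1}}<\frac{p_{n+2}}{q_{n+2}}-\frac{\gamma}{q_{n+2}^{\tau+1}},$$ and for even $n>N$ define $A_n:=\left(\frac{p_n}{q_n}+\frac{\gamma}{q_n^{\tau+1}},\ \frac{p_{n+2}}{q_{n+2}}-\frac{\gamma}{q_{n+2}^{\tau+1}}\right)$. Suppose moreover that for every even $n$, $$\alpha-\frac{p_n}{q_n}>\frac{\gamma}{q_n^{\tau+1}}.$$ Then there exists $N_1\in\mathbb{N}$ such that for every even $n>N_1$ and every rational $p/q$ ($p\in\mathbb{Z},q\in\mathbb{N}$): if $p/q\notin I_n$, then $\frac{p}{q}+\frac{\gamma}{q^{\tau+1}}\notin A_n$ and $\frac{p}{q}-\frac{\gamma}{q^{\tau+1}}\notin A_n$.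
   Context: For $x\in\mathbb{R}$, $\|x\|:=\min_{p\in\mathbb{Z}}|x-p|$; $\mathbb{N}=\{1,2,\dots\}$. For $\gamma>0,\tau\ge1$, $D_{\gamma,\tau}:=\{\alpha\in(0,1): \|q\alpha\|\ge\gamma/q^\tau\ \forall q\in\mathbb{N}\}$; its elements are irrational. For irrational $\alpha\in(0,1)$ write $\alpha=\cfrac{1}{a_1+\cfrac{1}{a_2+\cdots}}$ (so $a_0=0$), and let $p_n/q_n$ ($n\ge0$) be its convergents: $p_{-1}=1,q_{-1}=0,p_0=0,q_0=1$, $p_n=a_np_{n-1}+p_{n-2}$, $q_n=a_nq_{n-1}+q_{n-2}$. Even-indexed convergents lie below $\alpha$. *)

From Stdlib Require Import Reals Lra Lia ZArith Arith.
Open Scope R_scope.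

(* Diophantine set D_{gamma,tau}: alpha in (0,1) and for every q >= 1,
   ||q alpha|| = min_{p in Z} |q alpha - p| >= gamma / q^tau. *)
Definition Dset (gamma tau alpha : R) : Prop :=
  0 < alpha < 1 /\
  forall (q : nat) (p : Z), (1 <= q)%nat ->
    Rabs (INR q * alpha - IZR p) >= gamma / Rpower (INR q) tau.

(* Gauss map iterates: x_0 = alpha, x_{n+1} = 1/x_n - floor(1/x_n).
   (Int_part x = up x - 1 is the floor of x.) *)
Fixpoint gauss (alpha : R) (n : nat) : R :=
  match n with
  | O => alpha
  | S m => / gauss alpha m - IZR (Int_part (/ gauss alpha m))
  end.

Definition cf_a (alpha : R) (n : nat) : Z :=
  match n with
  | O => 0%Z
  | S m => Int_part (/ gauss alpha m)
  end.

(* (p_{n-1}, q_{n-1}, p_n, q_n) *)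
Fixpoint cf_pq (alpha : R) (n : nat) : Z * Z * Z * Z :=
  match n with
  | O => (1%Z, 0%Z, 0%Z, 1%Z)
  | S m =>
      let '(p', q', p, q) := cf_pq alpha m in
      let a := cf_a alpha (S m) in
      (p, q, (a * p + p')%Z, (a * q + q')%Z)
  end.

Definition cf_p (alpha : R) (n : nat) : Z := let '(_, _, p, _) := cf_pq alpha n in p.
Definition cf_q (alpha : R) (n : nat) : Z := let '(_, _, _, q) := cf_pq alpha n in q.

Definition conv (alpha : R) (n : nat) : R := IZR (cf_p alpha n) / IZR (cf_q alpha n).

Definition cf_shift (gamma tau q : R) : R := gamma / Rpower q (tau + 1).

From Stdlib Require Import Reals ZArith Arith Lra Lia Psatz.
Open Scope R_scope.

(* Even convergents c_k increase to alpha and odd ones decrease to it, and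
   consecutive convergents are Farey neighbours, so a fraction p/q with
   c_k <= p/q < c_(k+1) (k even) has q >= q_k, and q >= q_(k+1) if moreover
   c_k < p/q.  Write s(q) = gamma/q^(tau+1) and let p/q lie outside I_n.
   If p/q >= c_(n+2), the Diophantine condition |alpha - p/q| >= s(q) gives
   either p/q - s(q) >= alpha, or p/q < alpha < c_(n+3), whence q >= q_(n+2)
   and p/q - s(q) >= c_(n+2) - s(q_(n+2)).
   If p/q <= c_n, put p/q in a gap [c_m, c_(m+2)) with m <= n even.  When
   p/q = c_m, then q >= q_m and p/q + s(q) <= c_m + s(q_m), which lies to the
   left of A_n: by the separation hypothesis if m > N, and because c_n tends
   to alpha while the finitely many c_m + s(q_m) (m <= N) are < alpha
   otherwise.  When c_m < p/q < c_(m+2), then q >= q_(m+1), and the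
   Diophantine condition at q_(m+1) together with
   |q_(m+1) alpha - p_(m+1)| < 1/q_(m+2) gives gamma q_(m+2) < q^tau, so that
   p/q + s(q) <= p/q + 1/(q q_(m+2)) <= c_(m+2). *)

Lemma Rdiv_le_cross a b c d : 0 < b -> 0 < d -> (a / b <= c / d <-> a * d <= c * b).
Proof.
  intros Hb Hd.
  replace (c / d) with (a / b + (c * b - a * d) / (b * d)) by (field; lra).
  assert (0 < / (b * d)) by (apply Rinv_0_lt_compat; nra).
  unfold Rdiv at 2. split; intros; nra.
Qed.

Lemma Rdiv_lt_cross a b c d : 0 < b -> 0 < d -> (a / b < c / d <-> a * d < c * b).
Proof.
  intros Hb Hd.
  replace (c / d) with (a / b + (c * b - a * d) / (b * d)) by (field; lra).
  assert (0 < / (b * d)) by (apply Rinv_0_lt_compat; nra).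
  unfold Rdiv at 2. split; intros; nra.
Qed.

Lemma IZR_frac_le a b c d : (0 < b)%Z -> (0 < d)%Z ->
  (IZR a / IZR b <= IZR c / IZR d <-> (a * d <= c * b)%Z).
Proof.
  intros Hb Hd. rewrite Rdiv_le_cross by (apply IZR_lt; lia).
  rewrite <- !mult_IZR. split; [apply le_IZR | apply IZR_le].
Qed.

Lemma IZR_frac_lt a b c d : (0 < b)%Z -> (0 < d)%Z ->
  (IZR a / IZR b < IZR c / IZR d <-> (a * d < c * b)%Z).
Proof.
  intros Hb Hd. rewrite Rdiv_lt_cross by (apply IZR_lt; lia).
  rewrite <- !mult_IZR. split; [apply lt_IZR | apply IZR_lt].
Qed.

Lemma farey_denom_ge_l (P Q P' Q' p q : Z) : (0 <= Q')%Z -> (0 <= Q)%Z ->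
  (P' * Q - P * Q' = 1)%Z -> (P * q <= p * Q)%Z -> (p * Q' < P' * q)%Z -> (Q <= q)%Z.
Proof.
  intros HQ' HQ Hdet H1 H2.
  assert (Hq : q = (Q' * (p * Q - P * q) + Q * (P' * q - p * Q'))%Z).
  { transitivity (q * (P' * Q - P * Q'))%Z; [rewrite Hdet|]; ring. }
  nia.
Qed.

Lemma farey_denom_ge_r (P Q P' Q' p q : Z) : (0 <= Q')%Z -> (0 <= Q)%Z ->
  (P' * Q - P * Q' = 1)%Z -> (P * q < p * Q)%Z -> (p * Q' <= P' * q)%Z -> (Q' <= q)%Z.
Proof.
  intros HQ' HQ Hdet H1 H2.
  assert (Hq : q = (Q' * (p * Q - P * q) + Q * (P' * q - p * Q'))%Z).
  { transitivity (q * (P' * Q - P * Q'))%Z; [rewrite Hdet|]; ring. }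
  nia.
Qed.

Lemma cf_p_0 alpha : cf_p alpha 0 = 0%Z.
Proof. reflexivity. Qed.

Lemma cf_q_0 alpha : cf_q alpha 0 = 1%Z.
Proof. reflexivity. Qed.

Lemma cf_p_1 alpha : cf_p alpha 1 = 1%Z.
Proof. unfold cf_p; simpl; lia. Qed.

Lemma cf_q_1 alpha : cf_q alpha 1 = cf_a alpha 1.
Proof. unfold cf_q; simpl; lia. Qed.

Lemma cf_pq_SS alpha k :
  cf_p alpha (S (S k)) = (cf_a alpha (S (S k)) * cf_p alpha (S k) + cf_p alpha k)%Z /\
  cf_q alpha (S (S k)) = (cf_a alpha (S (S k)) * cf_q alpha (S k) + cf_q alpha k)%Z.
Proof.
  unfold cf_p, cf_q. cbn [cf_pq]. destruct (cf_pq alpha k) as [[[? ?] ?] ?]. auto.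
Qed.

Lemma cf_det alpha k :
  (cf_p alpha (S k) * cf_q alpha k - cf_p alpha k * cf_q alpha (S k))%Z
  = if Nat.even k then 1%Z else (-1)%Z.
Proof.
  induction k as [|k IH].
  - rewrite cf_p_0, cf_q_0, cf_p_1. reflexivity.
  - destruct (cf_pq_SS alpha k) as [-> ->].
    rewrite Nat.even_succ, <- Nat.negb_even.
    destruct (Nat.even k); simpl in *; lia.
Qed.

Lemma cf_det_even alpha k : Nat.Even k ->
  (cf_p alpha (S k) * cf_q alpha k - cf_p alpha k * cf_q alpha (S k) = 1)%Z.
Proof. intros He. rewrite cf_det. apply Nat.even_spec in He. now rewrite He. Qed.

Lemma cf_det_odd alpha k : Nat.Odd k ->
  (cf_p alpha (S k) * cf_q alpha k - cf_p alpha k * cf_q alpha (S k) = -1)%Z.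
Proof. intros Ho. rewrite cf_det, <- Nat.negb_odd. apply Nat.odd_spec in Ho. now rewrite Ho. Qed.

Lemma cf_cross_SS alpha k :
  (cf_p alpha (S (S k)) * cf_q alpha k - cf_p alpha k * cf_q alpha (S (S k))
   = cf_a alpha (S (S k)) * (cf_p alpha (S k) * cf_q alpha k - cf_p alpha k * cf_q alpha (S k)))%Z.
Proof. destruct (cf_pq_SS alpha k) as [-> ->]. ring. Qed.

Definition cf_identity alpha k : Prop :=
  alpha * (IZR (cf_q alpha (S k)) + IZR (cf_q alpha k) * gauss alpha (S k))
  = IZR (cf_p alpha (S k)) + IZR (cf_p alpha k) * gauss alpha (S k).

Lemma cf_identity_0 alpha : alpha <> 0 -> cf_identity alpha 0.
Proof.
  intros H0. unfold cf_identity.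
  rewrite cf_q_1, cf_q_0, cf_p_1, cf_p_0. simpl. field. exact H0.
Qed.

Lemma cf_identity_S alpha k : gauss alpha (S k) <> 0 ->
  cf_identity alpha k -> cf_identity alpha (S k).
Proof.
  unfold cf_identity. intros Hx Hk.
  destruct (cf_pq_SS alpha k) as [-> ->].
  change (gauss alpha (S (S k))) with (/ gauss alpha (S k) - IZR (cf_a alpha (S (S k)))).
  rewrite !plus_IZR, !mult_IZR.
  set (x := gauss alpha (S k)) in *.
  transitivity (alpha * (IZR (cf_q alpha (S k)) + IZR (cf_q alpha k) * x) / x).
  - field. exact Hx.
  - rewrite Hk. field. exact Hx.
Qed.

Section IrrationalExpansion.

Variable alpha : R.
Hypothesis alpha_01 : 0 < alpha < 1.
Hypothesis alpha_irrational : forall p q : Z, (1 <= q)%Z -> alpha * IZR q <> IZR p.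

Lemma alpha_mul_IZR_eq p q : alpha * IZR q = IZR p -> p = 0%Z /\ q = 0%Z.
Proof.
  intros E.
  destruct (Z.lt_trichotomy q 0) as [Hq|[->|Hq]].
  - exfalso. apply (alpha_irrational (- p) (- q)); [lia|].
    rewrite !opp_IZR. lra.
  - split; [|reflexivity]. apply eq_IZR. lra.
  - exfalso. apply (alpha_irrational p q); [lia|exact E].
Qed.

Lemma gauss_01_identity k : 0 < gauss alpha k < 1 /\ cf_identity alpha k.
Proof.
  induction k as [|k [Hx Hk]].
  - split; [exact alpha_01|]. apply cf_identity_0. lra.
  - assert (Hx' : 0 <= gauss alpha (S k) < 1).
    { simpl. pose proof (base_Int_part (/ gauss alpha k)). lra. }
    assert (Hx0 : gauss alpha (S k) <> 0).
    { intros E. unfold cf_identity in Hk. rewrite E, !Rmult_0_r, !Rplus_0_r in Hk.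
      destruct (alpha_mul_IZR_eq _ _ Hk) as [Hp Hq].
      pose proof (cf_det alpha k) as Hdet. rewrite Hp, Hq in Hdet.
      destruct (Nat.even k); lia. }
    split; [lra|]. apply cf_identity_S; assumption.
Qed.

Lemma gauss_01 k : 0 < gauss alpha k < 1.
Proof. apply gauss_01_identity. Qed.

Lemma cf_identity_holds k : cf_identity alpha k.
Proof. apply gauss_01_identity. Qed.

Lemma cf_a_ge_1 k : (1 <= cf_a alpha (S k))%Z.
Proof.
  pose proof (gauss_01 k) as Hx. simpl.
  pose proof (base_Int_part (/ gauss alpha k)) as [_ H].
  assert (1 < / gauss alpha k) by (rewrite <- Rinv_1; apply Rinv_lt_contravar; lra).
  assert (0 < Int_part (/ gauss alpha k))%Z by (apply lt_IZR; lra).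
  lia.
Qed.

Lemma cf_q_growth k :
  (1 <= cf_q alpha k <= cf_q alpha (S k) /\ Z.of_nat (S k) <= cf_q alpha (S k))%Z.
Proof.
  induction k as [|k IH].
  - rewrite cf_q_0, cf_q_1. pose proof (cf_a_ge_1 0). lia.
  - destruct (cf_pq_SS alpha k) as [_ ->]. pose proof (cf_a_ge_1 (S k)). nia.
Qed.

Lemma cf_q_pos k : (1 <= cf_q alpha k)%Z.
Proof. apply cf_q_growth. Qed.

Lemma cf_q_ge_index k : (Z.of_nat k <= cf_q alpha k)%Z.
Proof. destruct k; [rewrite cf_q_0; lia | apply cf_q_growth]. Qed.

Lemma IZR_cf_q_pos k : 0 < IZR (cf_q alpha k).
Proof. apply IZR_lt. pose proof (cf_q_pos k). lia. Qed.

Lemma cf_error k :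
  (alpha * IZR (cf_q alpha k) - IZR (cf_p alpha k))
    * (IZR (cf_q alpha (S k)) + IZR (cf_q alpha k) * gauss alpha (S k))
  = IZR (cf_p alpha (S k) * cf_q alpha k - cf_p alpha k * cf_q alpha (S k)).
Proof.
  pose proof (cf_identity_holds k) as Hk. unfold cf_identity in Hk.
  rewrite minus_IZR, !mult_IZR.
  transitivity (IZR (cf_q alpha k)
      * (alpha * (IZR (cf_q alpha (S k)) + IZR (cf_q alpha k) * gauss alpha (S k)))
    - IZR (cf_p alpha k) * (IZR (cf_q alpha (S k)) + IZR (cf_q alpha k) * gauss alpha (S k)));
    [ring | rewrite Hk; ring].
Qed.

Lemma cf_error_denom_gt k :
  IZR (cf_q alpha (S k)) < IZR (cf_q alpha (S k)) + IZR (cf_q alpha k) * gauss alpha (S k).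
Proof. pose proof (IZR_cf_q_pos k). pose proof (gauss_01 (S k)). nra. Qed.

Lemma alpha_sub_conv k :
  alpha - conv alpha k = (alpha * IZR (cf_q alpha k) - IZR (cf_p alpha k)) / IZR (cf_q alpha k).
Proof. unfold conv. pose proof (IZR_cf_q_pos k). field. lra. Qed.

Lemma conv_even_lt_alpha k : Nat.Even k -> conv alpha k < alpha.
Proof.
  intros He. pose proof (cf_error k) as E. rewrite cf_det_even in E by exact He.
  pose proof (cf_error_denom_gt k). pose proof (IZR_cf_q_pos k). pose proof (IZR_cf_q_pos (S k)).
  enough (0 < alpha - conv alpha k) by lra.
  rewrite alpha_sub_conv. apply Rdiv_lt_0_compat; [nra | lra].
Qed.

Lemma alpha_lt_conv_odd k : Nat.Odd k -> alpha < conv alpha k.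
Proof.
  intros Ho. pose proof (cf_error k) as E. rewrite cf_det_odd in E by exact Ho.
  pose proof (cf_error_denom_gt k). pose proof (IZR_cf_q_pos k). pose proof (IZR_cf_q_pos (S k)).
  enough (0 < - (alpha - conv alpha k)) by lra.
  rewrite alpha_sub_conv, <- Rdiv_opp_l. apply Rdiv_lt_0_compat; [nra | lra].
Qed.

Lemma cf_error_abs_lt k :
  Rabs (alpha * IZR (cf_q alpha k) - IZR (cf_p alpha k)) < / IZR (cf_q alpha (S k)).
Proof.
  pose proof (f_equal Rabs (cf_error k)) as E. rewrite Rabs_mult in E.
  pose proof (cf_error_denom_gt k). pose proof (IZR_cf_q_pos (S k)).
  rewrite (Rabs_pos_eq (_ + _)) in E by lra.
  assert (Rabs (IZR (cf_p alpha (S k) * cf_q alpha k - cf_p alpha k * cf_q alpha (S k))) = 1)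
    as E1 by (rewrite cf_det; destruct (Nat.even k); unfold Rabs; destruct Rcase_abs; lra).
  rewrite E1 in E.
  apply (Rmult_lt_reg_r (IZR (cf_q alpha (S k)))); [lra|].
  rewrite Rinv_l by lra.
  pose proof (Rabs_pos (alpha * IZR (cf_q alpha k) - IZR (cf_p alpha k))). nra.
Qed.

Lemma conv_even_lt_SS k : Nat.Even k -> conv alpha k < conv alpha (S (S k)).
Proof.
  intros He. pose proof (cf_q_pos k). pose proof (cf_q_pos (S (S k))).
  pose proof (cf_cross_SS alpha k) as E. rewrite cf_det_even in E by exact He.
  pose proof (cf_a_ge_1 (S k)).
  unfold conv. apply IZR_frac_lt; lia.
Qed.

Lemma conv_abs_sub_lt k : Rabs (alpha - conv alpha k) < / IZR (cf_q alpha k).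
Proof.
  pose proof (cf_error_abs_lt k) as Herr.
  pose proof (IZR_cf_q_pos k). pose proof (cf_q_pos (S k)) as Hq1. apply IZR_le in Hq1.
  assert (Herr1 : Rabs (alpha * IZR (cf_q alpha k) - IZR (cf_p alpha k)) < 1).
  { eapply Rlt_le_trans; [exact Herr|]. rewrite <- Rinv_1. apply Rinv_le_contravar; lra. }
  assert (0 < / IZR (cf_q alpha k)) by (apply Rinv_0_lt_compat; lra).
  rewrite alpha_sub_conv. unfold Rdiv.
  rewrite Rabs_mult, (Rabs_pos_eq (/ _)) by lra. nra.
Qed.

Lemma conv_even_gt_eventually M : M < alpha ->
  exists K, forall n, Nat.Even n -> (K <= n)%nat -> M < conv alpha n.
Proof.
  intros HM. destruct (archimed_cor1 (alpha - M)) as [K [HK HK0]]; [lra|].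
  exists K. intros n He Hn.
  assert (HqK : INR K <= IZR (cf_q alpha n)).
  { rewrite INR_IZR_INZ. apply IZR_le. pose proof (cf_q_ge_index n). lia. }
  assert (/ IZR (cf_q alpha n) <= / INR K)
    by (apply Rinv_le_contravar; [apply lt_0_INR; lia | exact HqK]).
  pose proof (conv_abs_sub_lt n). pose proof (conv_even_lt_alpha n He).
  rewrite Rabs_pos_eq in * by lra. lra.
Qed.

Lemma conv_denom_ge_l k (p q : Z) : Nat.Even k -> (1 <= q)%Z ->
  conv alpha k <= IZR p / IZR q < conv alpha (S k) -> (cf_q alpha k <= q)%Z.
Proof.
  intros He Hq [H1 H2]. unfold conv in H1, H2.
  pose proof (cf_q_pos k). pose proof (cf_q_pos (S k)).
  apply IZR_frac_le in H1; [|lia|lia]. apply IZR_frac_lt in H2; [|lia|lia].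
  eapply farey_denom_ge_l; eauto; try lia. apply cf_det_even, He.
Qed.

Lemma conv_denom_ge_r k (p q : Z) : Nat.Even k -> (1 <= q)%Z ->
  conv alpha k < IZR p / IZR q <= conv alpha (S k) -> (cf_q alpha (S k) <= q)%Z.
Proof.
  intros He Hq [H1 H2]. unfold conv in H1, H2.
  pose proof (cf_q_pos k). pose proof (cf_q_pos (S k)).
  apply IZR_frac_lt in H1; [|lia|lia]. apply IZR_frac_le in H2; [|lia|lia].
  eapply farey_denom_ge_r; eauto; try lia. apply cf_det_even, He.
Qed.

End IrrationalExpansion.

Section Shift.

Variables gamma tau : R.

Lemma cf_shift_pos y : 0 < gamma -> 0 < cf_shift gamma tau y.
Proof. intros Hg. apply Rdiv_lt_0_compat; [exact Hg | apply exp_pos]. Qed.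

Lemma cf_shift_eq y : 0 < y -> cf_shift gamma tau y = gamma / Rpower y tau / y.
Proof.
  intros Hy. unfold cf_shift. rewrite Rpower_plus, Rpower_1 by exact Hy.
  pose proof (exp_pos (tau * ln y)). unfold Rpower. field. lra.
Qed.

Lemma cf_shift_antimono y1 y2 : 0 <= gamma -> -1 <= tau -> 0 < y1 <= y2 ->
  cf_shift gamma tau y2 <= cf_shift gamma tau y1.
Proof.
  intros Hg Ht Hy. unfold cf_shift, Rdiv. apply Rmult_le_compat_l; [exact Hg|].
  apply Rinv_le_contravar; [apply exp_pos | apply Rle_Rpower_l; lra].
Qed.

Lemma cf_shift_lt_inv y : 0 < gamma < 1 -> 0 <= tau -> 1 <= y -> cf_shift gamma tau y < / y.
Proof.
  intros Hg Ht Hy. rewrite cf_shift_eq by lra.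
  assert (1 <= Rpower y tau) by (rewrite <- (Rpower_O y) by lra; apply Rle_Rpower; lra).
  assert (/ Rpower y tau <= 1) by (rewrite <- Rinv_1; apply Rinv_le_contravar; lra).
  assert (0 < / Rpower y tau) by (apply Rinv_0_lt_compat; lra).
  assert (0 < / y) by (apply Rinv_0_lt_compat; lra).
  assert (gamma * / Rpower y tau < 1) by nra.
  unfold Rdiv. nra.
Qed.

End Shift.

Section Diophantine.

Variables gamma tau alpha : R.
Hypothesis gamma_pos : 0 < gamma.
Hypothesis tau_nonneg : 0 <= tau.
Hypothesis alpha_D : Dset gamma tau alpha.

Lemma Dset_Z (p q : Z) : (1 <= q)%Z ->
  gamma / Rpower (IZR q) tau <= Rabs (IZR q * alpha - IZR p).
Proof.
  intros Hq. destruct alpha_D as [_ HD].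
  rewrite <- (Z2Nat.id q), <- INR_IZR_INZ by lia.
  apply Rge_le, HD. lia.
Qed.

Lemma Dset_irrational (p q : Z) : (1 <= q)%Z -> alpha * IZR q <> IZR p.
Proof.
  intros Hq E. pose proof (Dset_Z p q Hq) as H.
  rewrite Rmult_comm, E, Rminus_diag, Rabs_R0 in H.
  pose proof (Rdiv_lt_0_compat gamma (Rpower (IZR q) tau) gamma_pos (exp_pos _)). lra.
Qed.

Let alpha_01 : 0 < alpha < 1 := proj1 alpha_D.
Let alpha_irr := Dset_irrational.

Lemma Dset_gamma_lt_1 : gamma < 1.
Proof.
  pose proof (Dset_Z 0 1 ltac:(lia)) as H.
  unfold Rpower in H. rewrite ln_1, Rmult_0_r, exp_0, Rdiv_1_r, Rmult_1_l, Rminus_0_r in H.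
  rewrite Rabs_pos_eq in H; lra.
Qed.

Lemma Dset_shift_le_dist (p q : Z) : (1 <= q)%Z ->
  cf_shift gamma tau (IZR q) <= Rabs (alpha - IZR p / IZR q).
Proof.
  intros Hq. assert (Hq' : 0 < IZR q) by (apply IZR_lt; lia).
  rewrite cf_shift_eq by exact Hq'.
  replace (alpha - IZR p / IZR q) with ((IZR q * alpha - IZR p) / IZR q) by (field; lra).
  unfold Rdiv at 3. rewrite Rabs_mult, (Rabs_pos_eq (/ _)) by (apply Rlt_le, Rinv_0_lt_compat, Hq').
  apply Rmult_le_compat_r; [apply Rlt_le, Rinv_0_lt_compat, Hq' | apply Dset_Z, Hq].
Qed.

Lemma Dset_cf_q_succ_lt k :
  gamma * IZR (cf_q alpha (S k)) < Rpower (IZR (cf_q alpha k)) tau.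
Proof.
  pose proof (Dset_Z (cf_p alpha k) (cf_q alpha k) (cf_q_pos alpha alpha_01 alpha_irr k)) as H.
  pose proof (cf_error_abs_lt alpha alpha_01 alpha_irr k) as H'.
  rewrite Rmult_comm in H.
  pose proof (IZR_cf_q_pos alpha alpha_01 alpha_irr (S k)).
  pose proof (exp_pos (tau * ln (IZR (cf_q alpha k)))). fold (Rpower (IZR (cf_q alpha k)) tau) in *.
  assert (Hlt : gamma / Rpower (IZR (cf_q alpha k)) tau < 1 / IZR (cf_q alpha (S k)))
    by (unfold Rdiv at 2; lra).
  rewrite Rdiv_lt_cross in Hlt by lra. lra.
Qed.

Lemma add_shift_le_conv_SS k (p q : Z) : Nat.Even k -> (1 <= q)%Z ->
  conv alpha k < IZR p / IZR q < conv alpha (S (S k)) ->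
  IZR p / IZR q + cf_shift gamma tau (IZR q) <= conv alpha (S (S k)).
Proof.
  intros He Hq [H1 H2].
  assert (He2 : Nat.Even (S (S k))) by (apply Nat.Even_succ_succ, He).
  assert (Ho : Nat.Odd (S k)) by (apply Nat.Odd_succ, He).
  pose proof (alpha_lt_conv_odd alpha alpha_01 alpha_irr _ Ho).
  pose proof (conv_even_lt_alpha alpha alpha_01 alpha_irr _ He2).
  assert (Hq1 : (cf_q alpha (S k) <= q)%Z)
    by (apply (conv_denom_ge_r alpha alpha_01 alpha_irr k p q); auto; lra).
  pose proof (cf_q_pos alpha alpha_01 alpha_irr (S k)).
  pose proof (cf_q_pos alpha alpha_01 alpha_irr (S (S k))) as Hq2.
  assert (Hnum : (1 <= cf_p alpha (S (S k)) * q - p * cf_q alpha (S (S k)))%Z).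
  { unfold conv in H2. apply IZR_frac_lt in H2; lia. }
  apply IZR_le in Hnum. rewrite minus_IZR, !mult_IZR in Hnum.
  pose proof (Dset_cf_q_succ_lt (S k)) as Hdio.
  assert (Hpow : Rpower (IZR (cf_q alpha (S k))) tau <= Rpower (IZR q) tau)
    by (apply Rle_Rpower_l; [lra | split; [apply IZR_lt; lia | apply IZR_le, Hq1]]).
  assert (HqR : 0 < IZR q) by (apply IZR_lt; lia).
  assert (Hq2R : 0 < IZR (cf_q alpha (S (S k)))) by (apply IZR_lt; lia).
  pose proof (exp_pos (tau * ln (IZR q))). fold (Rpower (IZR q) tau) in *.
  rewrite cf_shift_eq by exact HqR. unfold conv.
  set (Q2 := IZR (cf_q alpha (S (S k)))) in *. set (P2 := IZR (cf_p alpha (S (S k)))) in *.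
  set (Rq := Rpower (IZR q) tau) in *.
  replace (P2 / Q2) with (IZR p / IZR q + (P2 * IZR q - IZR p * Q2) / (IZR q * Q2))
    by (field; lra).
  replace (gamma / Rq / IZR q) with (gamma / (Rq * IZR q)) by (field; lra).
  assert (gamma * Q2 <= (P2 * IZR q - IZR p * Q2) * Rq) by nra.
  apply Rplus_le_compat_l. apply Rdiv_le_cross; nra.
Qed.

Lemma shift_le_of_conv_le k (p q : Z) : Nat.Even k -> (1 <= q)%Z ->
  conv alpha k <= IZR p / IZR q < conv alpha (S k) ->
  cf_shift gamma tau (IZR q) <= cf_shift gamma tau (IZR (cf_q alpha k)).
Proof.
  intros He Hq Hx. apply cf_shift_antimono; [lra | lra |].
  pose proof (IZR_cf_q_pos alpha alpha_01 alpha_irr k).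
  split; [assumption|]. apply IZR_le.
  exact (conv_denom_ge_l alpha alpha_01 alpha_irr k p q He Hq Hx).
Qed.

Lemma conv_sub_shift_le k (p q : Z) : Nat.Even k -> (1 <= q)%Z ->
  conv alpha k <= IZR p / IZR q ->
  conv alpha k - cf_shift gamma tau (IZR (cf_q alpha k))
  <= IZR p / IZR q - cf_shift gamma tau (IZR q).
Proof.
  intros He Hq Hx.
  pose proof (cf_shift_pos gamma tau (IZR (cf_q alpha k)) gamma_pos).
  pose proof (conv_even_lt_alpha alpha alpha_01 alpha_irr k He).
  pose proof (Dset_shift_le_dist p q Hq) as Hdist.
  destruct (Rlt_or_le (IZR p / IZR q) alpha) as [Hlt|Hge].
  - assert (Ho : Nat.Odd (S k)) by (apply Nat.Odd_succ, He).
    pose proof (alpha_lt_conv_odd alpha alpha_01 alpha_irr _ Ho).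
    pose proof (shift_le_of_conv_le k p q He Hq ltac:(lra)). lra.
  - rewrite Rabs_left1 in Hdist by lra. lra.
Qed.

End Diophantine.

Section BelowConvergents.

Variables gamma tau alpha M : R.
Hypothesis gamma_pos : 0 < gamma.
Hypothesis tau_nonneg : 0 <= tau.
Hypothesis alpha_D : Dset gamma tau alpha.
Hypothesis conv_add_shift_le_max : forall j, Nat.Even j ->
  conv alpha j + cf_shift gamma tau (IZR (cf_q alpha j)) <= Rmax (conv alpha (S (S j))) M.

Let alpha_01 : 0 < alpha < 1 := proj1 alpha_D.
Let alpha_irr := Dset_irrational gamma tau alpha gamma_pos alpha_D.
Let gamma_01 : 0 < gamma < 1 := conj gamma_pos (Dset_gamma_lt_1 gamma tau alpha alpha_D).

Lemma add_shift_le_max n (p q : Z) : Nat.Even n -> (1 <= q)%Z ->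
  IZR p / IZR q < conv alpha n ->
  IZR p / IZR q + cf_shift gamma tau (IZR q) <= Rmax (conv alpha n) M.
Proof.
  intros [i ->] Hq. assert (HqR : 1 <= IZR q) by (apply IZR_le; exact Hq).
  induction i as [|i IH]; intros Hx.
  - change (2 * 0)%nat with 0%nat in *.
    assert (Hp : (p <= -1)%Z).
    { unfold conv in Hx. rewrite cf_p_0, cf_q_0 in Hx. apply IZR_frac_lt in Hx; lia. }
    apply IZR_le in Hp.
    pose proof (cf_shift_lt_inv gamma tau (IZR q) gamma_01 tau_nonneg HqR).
    assert (IZR p / IZR q + / IZR q <= 0).
    { replace (IZR p / IZR q + / IZR q) with ((IZR p + 1) * / IZR q) by (field; lra).
      assert (0 < / IZR q) by (apply Rinv_0_lt_compat; lra). nra. }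
    eapply Rle_trans; [|apply Rmax_l]. unfold conv. rewrite cf_p_0, Rdiv_0_l. lra.
  - replace (2 * S i)%nat with (S (S (2 * i))) in * by lia.
    set (j := (2 * i)%nat) in *.
    assert (He : Nat.Even j) by (exists i; reflexivity).
    assert (Ho : Nat.Odd (S j)) by (apply Nat.Odd_succ, He).
    pose proof (conv_even_lt_SS alpha alpha_01 alpha_irr j He).
    pose proof (conv_even_lt_alpha alpha alpha_01 alpha_irr j He).
    pose proof (alpha_lt_conv_odd alpha alpha_01 alpha_irr (S j) Ho).
    pose proof (Rmax_l (conv alpha (S (S j))) M).
    destruct (Rtotal_order (IZR p / IZR q) (conv alpha j)) as [Hlt|[Heq|Hgt]].
    + eapply Rle_trans; [apply IH, Hlt|]. apply Rle_max_compat_r. lra.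
    + pose proof (shift_le_of_conv_le gamma tau alpha gamma_pos tau_nonneg alpha_D j p q He Hq
        ltac:(lra)).
      pose proof (conv_add_shift_le_max j He). lra.
    + pose proof (add_shift_le_conv_SS gamma tau alpha gamma_pos tau_nonneg alpha_D j p q He Hq
        ltac:(lra)). lra.
Qed.

Lemma add_shift_le_conv_add_shift n (p q : Z) : Nat.Even n -> (1 <= q)%Z ->
  M < conv alpha n -> IZR p / IZR q <= conv alpha n ->
  IZR p / IZR q + cf_shift gamma tau (IZR q)
  <= conv alpha n + cf_shift gamma tau (IZR (cf_q alpha n)).
Proof.
  intros He Hq HM [Hlt|Heq].
  - pose proof (add_shift_le_max n p q He Hq Hlt) as H. rewrite Rmax_left in H by lra.
    pose proof (cf_shift_pos gamma tau (IZR (cf_q alpha n)) gamma_pos). lra.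
  - assert (Ho : Nat.Odd (S n)) by (apply Nat.Odd_succ, He).
    pose proof (conv_even_lt_alpha alpha alpha_01 alpha_irr n He).
    pose proof (alpha_lt_conv_odd alpha alpha_01 alpha_irr (S n) Ho).
    pose proof (shift_le_of_conv_le gamma tau alpha gamma_pos tau_nonneg alpha_D n p q He Hq
      ltac:(lra)). lra.
Qed.

End BelowConvergents.

Lemma finite_bound_lt (P : nat -> bool) (f : nat -> R) (a : R) N :
  (forall m, (m <= N)%nat -> P m = true -> f m < a) ->
  exists M, M < a /\ forall m, (m <= N)%nat -> P m = true -> f m <= M.
Proof.
  induction N as [|N IH]; intros Hf.
  - exists (if P 0%nat then f 0%nat else a - 1). split.
    + destruct (P 0%nat) eqn:E; [apply Hf; auto | lra].
    + intros m Hm Hm'. replace m with 0%nat in * by lia. rewrite Hm'. lra.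
  - destruct IH as [M [HMa HM]]; [intros m Hm; apply Hf; lia|].
    exists (if P (S N) then Rmax M (f (S N)) else M). split.
    + destruct (P (S N)) eqn:E; [apply Rmax_lub_lt; auto | auto].
    + intros m Hm Hm'. destruct (Nat.eq_dec m (S N)) as [->|Hne].
      * rewrite Hm'. apply Rmax_r.
      * specialize (HM m ltac:(lia) Hm').
        destruct (P (S N)); [eapply Rle_trans; [exact HM | apply Rmax_l] | exact HM].
Qed.

Lemma conv_add_shift_bound (gamma tau alpha : R) (N : nat) : 0 < gamma ->
  (forall n : nat, Nat.Even n -> (N < n)%nat ->
     conv alpha n + cf_shift gamma tau (IZR (cf_q alpha n))
       < conv alpha (n + 2)%nat - cf_shift gamma tau (IZR (cf_q alpha (n + 2)%nat))) ->
  (forall n : nat, Nat.Even n ->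
     alpha - conv alpha n > cf_shift gamma tau (IZR (cf_q alpha n))) ->
  exists M, M < alpha /\ forall j, Nat.Even j ->
    conv alpha j + cf_shift gamma tau (IZR (cf_q alpha j)) <= Rmax (conv alpha (S (S j))) M.
Proof.
  intros hgamma hsep hgap.
  destruct (finite_bound_lt Nat.even
              (fun m => conv alpha m + cf_shift gamma tau (IZR (cf_q alpha m))) alpha N)
    as [M [HMa HM]].
  { intros m _ Hm. apply Nat.even_spec in Hm. specialize (hgap m Hm). lra. }
  exists M. split; [exact HMa|]. intros j He.
  destruct (le_lt_dec j N) as [HjN|HjN].
  - eapply Rle_trans; [apply (HM j HjN), Nat.even_spec, He | apply Rmax_r].
  - specialize (hsep j He HjN). replace (j + 2)%nat with (S (S j)) in hsep by lia.
    pose proof (cf_shift_pos gamma tau (IZR (cf_q alpha (S (S j)))) hgamma).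
    eapply Rle_trans; [|apply Rmax_l]. lra.
Qed.

Theorem lemma1 (gamma tau alpha : R) (N : nat)
  (hgamma : 0 < gamma) (htau : 1 < tau) (hD : Dset gamma tau alpha)
  (hsep : forall n : nat, Nat.Even n -> (N < n)%nat ->
     conv alpha n + cf_shift gamma tau (IZR (cf_q alpha n))
       < conv alpha (n + 2)%nat - cf_shift gamma tau (IZR (cf_q alpha (n + 2)%nat)))
  (hgap : forall n : nat, Nat.Even n ->
     alpha - conv alpha n > cf_shift gamma tau (IZR (cf_q alpha n))) :
  exists N1 : nat, (N <= N1)%nat /\
    forall n : nat, Nat.Even n -> (N1 < n)%nat ->
    forall (p : Z) (q : nat), (1 <= q)%nat ->
      ~ (conv alpha n < IZR p / INR q < conv alpha (n + 2)%nat) ->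
      ~ (conv alpha n + cf_shift gamma tau (IZR (cf_q alpha n))
           < IZR p / INR q + cf_shift gamma tau (INR q)
           < conv alpha (n + 2)%nat - cf_shift gamma tau (IZR (cf_q alpha (n + 2)%nat))) /\
      ~ (conv alpha n + cf_shift gamma tau (IZR (cf_q alpha n))
           < IZR p / INR q - cf_shift gamma tau (INR q)
           < conv alpha (n + 2)%nat - cf_shift gamma tau (IZR (cf_q alpha (n + 2)%nat))).
Proof.
  assert (Htau : 0 <= tau) by lra.
  destruct (conv_add_shift_bound gamma tau alpha N hgamma hsep hgap) as [M [HMa Hmax]].
  destruct (conv_even_gt_eventually alpha (proj1 hD) (Dset_irrational gamma tau alpha hgamma hD)
              M HMa) as [K HK].
  exists (N + K)%nat. split; [lia|].
  intros n He Hn p q Hq Hnot. replace (n + 2)%nat with (S (S n)) in * by lia.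
  rewrite INR_IZR_INZ in *. set (qz := Z.of_nat q) in *.
  assert (Hqz : (1 <= qz)%Z) by lia.
  pose proof (cf_shift_pos gamma tau (IZR qz) hgamma).
  pose proof (cf_shift_pos gamma tau (IZR (cf_q alpha n)) hgamma).
  pose proof (cf_shift_pos gamma tau (IZR (cf_q alpha (S (S n)))) hgamma).
  destruct (Rle_or_lt (IZR p / IZR qz) (conv alpha n)) as [Hleft|Hright].
  - pose proof (add_shift_le_conv_add_shift gamma tau alpha M hgamma Htau hD Hmax n p qz He Hqz
      (HK n He ltac:(lia)) Hleft).
    split; lra.
  - assert (Hx : conv alpha (S (S n)) <= IZR p / IZR qz) by (apply Rnot_lt_le; tauto).
    pose proof (conv_sub_shift_le gamma tau alpha hgamma Htau hD (S (S n)) p qz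
      (proj2 (Nat.Even_succ_succ n) He) Hqz Hx).
    split; lra.
Qed.
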